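(* Let $n=|V|\ge 4$ and suppose the designer does not know the relationship network. Then there is no valid mechanism $g:\boldsymbol\Theta\to[0,1]^V$ that is both DSIC and efficient.
   Context: Let $V=\{1,\dots,n\}$ be a finite set of agents. A relationship network on $V$ assigns to every unordered pair of distinct agents exactly one of three symmetric relations: friends, enemies, or impartial; $F_i,E_i,I_i$ denote the friends, enemies and impartials of $i$, partitioning $V\setminus\{i\}$. A state of the world is a pair consisting of a set $N\subseteq V$ of needy agents and a relationship network. Preferences: fix weights $w_f,w_e>0$; an agent with friend set $F$ and enemy set $E$ and own index $i$ ranks $p,p'\in[0,1]^V$ by $p\succ p'$ iff either $p_i>p'_i$, or $p_i=p'_i$ and $w_f\sum_{j\in F}(p_j-p'_j)-w_e\sum_{j\in E}(p_j-p'_j)>0$; $p\succsim p'$ means not $p'\succ p$. Unknown-network setting: agent $i$'s type set $\Theta_i$ consists of all triples $(N,F,E)$ with $N\subseteq V$ and $F,E$ disjoint subsets of $V\setminus\{i\}$; $\boldsymbol\Theta=\prod_{i\in V}\Theta_i$. A mechanism is $g:\boldsymbol\Theta\to[0,1]^V$; it is valid if $\sum_i g_i(\mathbf m)\le1$ for all $\mathbf m\in\boldsymbol\Theta$. It is DSIC if for all $i$, all $\mathbf m\in\boldsymbol\Theta$ and all $m'_i\in\Theta_i$, $g(\mathbf m)\succsim_{m_i} g(m'_i,\mathbf m_{-i})$, where $\succsim_{m_i}$ is the preference of agent $i$ with the friend and enemy sets given in $m_i$. At a state, the truthful profile is $m_i=(N,F_i,E_i)$ for all $i$. The mechanism is efficient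 if at every state with $N\neq\varnothing$, $\sum_{i\in N}g_i(\mathbf m)=1$ at the truthful profile $\mathbf m$. *)

From HB Require Import structures.
From mathcomp Require Import all_boot all_order all_algebra.
From mathcomp Require Import reals.
Set Implicit Arguments. Unset Strict Implicit. Unset Printing Implicit Defensive.
Import Order.TTheory GRing.Theory Num.Theory.
Local Open Scope ring_scope.

Definition type_t (n : nat) : Type := ({set 'I_n} * {set 'I_n} * {set 'I_n})%type.
Definition tN n (t : type_t n) : {set 'I_n} := t.1.1.
Definition tF n (t : type_t n) : {set 'I_n} := t.1.2.
Definition tE n (t : type_t n) : {set 'I_n} := t.2.

Definition in_Theta n (i : 'I_n) (t : type_t n) : Prop :=
  [/\ tF t :&: tE t = set0, i \notin tF t & i \notin tE t].

Definition profile (n : nat) : Type := {ffun 'I_n -> type_t n}.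
Definition in_bTheta n (m : profile n) : Prop := forall i, in_Theta i (m i).

Definition upd n (m : profile n) (i : 'I_n) (t : type_t n) : profile n :=
  [ffun j => if j == i then t else m j].

Definition mechanism (R : realType) (n : nat) : Type := profile n -> 'I_n -> R.

Definition spref (R : realType) n (wf we : R) (i : 'I_n) (F E : {set 'I_n})
  (p p' : 'I_n -> R) : Prop :=
  p i > p' i \/
  (p i = p' i /\
   wf * (\sum_(j in F) (p j - p' j)) - we * (\sum_(j in E) (p j - p' j)) > 0).

Definition wpref (R : realType) n (wf we : R) (i : 'I_n) (F E : {set 'I_n})
  (p p' : 'I_n -> R) : Prop := ~ spref wf we i F E p' p.

Definition mech_valid (R : realType) n (g : mechanism R n) : Prop :=
  forall m : profile n, in_bTheta m -> \sum_(i < n) g m i <= 1.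

Definition mech_range01 (R : realType) n (g : mechanism R n) : Prop :=
  forall m : profile n, in_bTheta m -> forall i, 0 <= g m i <= 1.

Definition DSIC (R : realType) n (wf we : R) (g : mechanism R n) : Prop :=
  forall (i : 'I_n) (m : profile n) (t : type_t n),
    in_bTheta m -> in_Theta i t ->
    wpref wf we i (tF (m i)) (tE (m i)) (g m) (g (upd m i t)).

(* A relationship network: symmetric, irreflexive, disjoint friend / enemy
   relations; every other pair of distinct agents is impartial. *)
Definition network n (fr en : rel 'I_n) : Prop :=
  [/\ forall i j, fr i j = fr j i, forall i j, en i j = en j i,
      forall i, ~~ fr i i, forall i, ~~ en i i
    & forall i j, ~~ (fr i j && en i j)].

Definition truthful n (N : {set 'I_n}) (fr en : rel 'I_n) : profile n :=
  [ffun i => (N, [set j | fr i j], [set j | en i j])].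

Definition efficient (R : realType) n (g : mechanism R n) : Prop :=
  forall (N : {set 'I_n}) (fr en : rel 'I_n),
    network fr en -> N != set0 ->
    \sum_(i in N) g (truthful N fr en) i = 1.

(** Under DSIC an agent's own share does not depend on her own report, and an
    agent who reports a single friend [h] and no enemy can never raise [h]'s
    share by changing her report.  Take two agents [h], [o] and let the others
    [V'] be impartial and unneedy.  One after the other, each agent of [V'] now
    declares [o] alone needy and [h] her only friend; [h]'s share can only grow.
    Then [h] declares [o] alone needy and all of [V'] her friends: the profile
    now differs only in [o]'s report from the truthful profile of a network in
    which [o] alone is needy, so [o] still gets everything and [h] nothing.
    Since [h]'s own report does not matter to her, [h] already got nothing when
    [h] and [o] were both needy; by symmetry neither did [o], contradicting
    efficiency. *)

From HB Require Import structures.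
From mathcomp Require Import all_boot all_order all_algebra.
From mathcomp Require Import reals.
Import Order.TTheory GRing.Theory Num.Theory.
Local Open Scope ring_scope.
Set Implicit Arguments. Unset Strict Implicit. Unset Printing Implicit Defensive.

Section Profiles.

Variable n : nat.
Implicit Types (m : profile n) (i j : 'I_n) (t : type_t n) (S : {set 'I_n}).

Lemma upd_in_bTheta m i t :
  in_bTheta m -> in_Theta i t -> in_bTheta (upd m i t).
Proof. by move=> Hm Ht j; rewrite /upd ffunE; case: eqP => [->|]. Qed.

Lemma updK m i t : upd (upd m i t) i (m i) = m.
Proof. by apply/ffunP => j; rewrite !ffunE; case: eqP => // ->. Qed.

Lemma in_Theta_impartial i (N : {set 'I_n}) :
  in_Theta i ((N, set0, set0) : type_t n).
Proof. by rewrite /in_Theta /tF /tE /= setI0 in_set0. Qed.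

Lemma in_Theta_friends i (N F : {set 'I_n}) :
  i \notin F -> in_Theta i ((N, F, set0) : type_t n).
Proof. by rewrite /in_Theta /tF /tE /= setI0 in_set0. Qed.

Definition switch m S t : profile n := [ffun i => if i \in S then t else m i].

Lemma switch_set0 m t : switch m set0 t = m.
Proof. by apply/ffunP => i; rewrite ffunE in_set0. Qed.

Lemma switchD1 m S t x :
  x \in S -> switch m (S :\ x) t = upd (switch m S t) x (m x).
Proof.
by move=> xS; apply/ffunP => j; rewrite !ffunE in_setD1; case: eqVneq => [->|].
Qed.

Lemma truthful_in_bTheta (N : {set 'I_n}) (fr en : rel 'I_n) :
  network fr en -> in_bTheta (truthful N fr en).
Proof.
case=> _ _ irr_fr irr_en disj i; rewrite /in_Theta /tF /tE ffunE /=; split.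
- by apply/setP => j; rewrite !inE; apply: negbTE (disj i j).
- by rewrite inE irr_fr.
- by rewrite inE irr_en.
Qed.

End Profiles.

Definition no_relation (n : nat) : rel 'I_n := fun _ _ => false.
Arguments no_relation : clear implicits.

Definition star n (h o : 'I_n) : rel 'I_n := fun i j =>
  ((i == h) && (j != h) && (j != o)) || ((j == h) && (i != h) && (i != o)).

Lemma network_no_relation n : network (no_relation n) (no_relation n).
Proof. by split => // i j; rewrite andbF. Qed.

Lemma network_star n (h o : 'I_n) : network (star h o) (no_relation n).
Proof.
split=> // [i j|i|i j]; first by rewrite /star orbC.
  by rewrite /star; case: (i == h).
by rewrite andbF.
Qed.

Section Mechanism.

Variables (R : realType) (n : nat) (wf we : R) (g : mechanism R n).
Hypotheses (wf_gt0 : 0 < wf) (dsic : DSIC wf we g).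
Implicit Types (m : profile n) (t : type_t n) (S : {set 'I_n}).

Lemma DSIC_own_share i m t :
  in_bTheta m -> in_Theta i t -> g (upd m i t) i = g m i.
Proof.
move=> Hm Ht; have Hm' := upd_in_bTheta Hm Ht.
apply/eqP; rewrite eq_le !leNgt; apply/andP; split; apply/negP => lt.
- by apply: (dsic Hm Ht); left.
- by apply: (dsic Hm' (Hm i)); rewrite updK; left.
Qed.

Lemma DSIC_friend_share c h m t :
  in_bTheta m -> tF (m c) = [set h] -> tE (m c) = set0 ->
  in_Theta c t -> g (upd m c t) h <= g m h.
Proof.
move=> Hm mF mE Ht; rewrite leNgt; apply/negP => lt.
apply: (dsic Hm Ht); right; split; first by rewrite DSIC_own_share.
by rewrite mF mE big_set1 big_set0 mulr0 subr0 mulr_gt0 // subr_gt0.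
Qed.

(* Undo the switches one agent at a time: each agent undoing hers reports [h]
   as her only friend. *)
Lemma DSIC_switch_friend_share h (N : {set 'I_n}) m S :
  in_bTheta m -> h \notin S ->
  g m h <= g (switch m S (N, [set h], set0)) h.
Proof.
move=> Hm hS.
have switch_in_bTheta (T : {set 'I_n}) : T \subset S ->
    in_bTheta (switch m T (N, [set h], set0)).
  move=> /subsetP sTS i; rewrite ffunE; case: ifP => // /sTS iS.
  by apply: in_Theta_friends; rewrite inE; apply: contraNneq hS => <-.
suff switch_le k (T : {set 'I_n}) : #|T| = k -> T \subset S ->
    g m h <= g (switch m T (N, [set h], set0)) h by exact: switch_le (subxx S).
elim: k T => [|k IHk] T cardT sTS.
  by rewrite (cards0_eq cardT) switch_set0.
have [x xT] : exists x, x \in T by apply/set0Pn; rewrite -card_gt0 cardT.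
have sT'S : T :\ x \subset S by apply: subset_trans (subsetDl _ _) sTS.
have cardT' : #|T :\ x| = k by move: cardT; rewrite (cardsD1 x) xT => -[].
apply: le_trans (IHk _ cardT' sT'S) _; rewrite switchD1 //.
by apply: DSIC_friend_share; rewrite ?ffunE ?xT //; apply: switch_in_bTheta.
Qed.

Hypotheses (range01 : mech_range01 g) (valid : mech_valid g).

Lemma valid_share1_others0 m a b :
  in_bTheta m -> a != b -> g m b = 1 -> g m a = 0.
Proof.
move=> Hm ab gb; have /andP[ga_ge0 _] := range01 Hm a.
have rest_ge0 : 0 <= \sum_(i < n | (i != b) && (i != a)) g m i.
  by apply: sumr_ge0 => i _; have /andP[] := range01 Hm i.
have := valid Hm; rewrite (bigD1 b) //= (bigD1 a) //= gb -[X in _ <= X]addr0.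
rewrite lerD2l => sum_le0; apply/eqP; rewrite eq_le ga_ge0 andbT.
by apply: le_trans sum_le0; rewrite lerDl.
Qed.

Hypothesis eff : efficient g.

Lemma DSIC_efficient_share_pair0 (h o : 'I_n) :
  h != o ->
  g (truthful [set h; o] (no_relation n) (no_relation n)) h = 0.
Proof.
move=> ho.
set N := [set h; o]; set V' := ~: N.
set m0 := truthful N (no_relation n) (no_relation n).
have Hm0 : in_bTheta m0 := truthful_in_bTheta N (network_no_relation n).
have hV' : h \notin V' by rewrite !inE eqxx.
set m1 := switch m0 V' ([set o], [set h], set0).
have Hm1 : in_bTheta m1.
  move=> i; rewrite ffunE; case: ifP => [iV'|_]; last exact: Hm0.
  by apply: in_Theta_friends; rewrite inE; apply: contraTneq iV' => ->.
set th : type_t n := ([set o], V', set0).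
set m2 := truthful [set o] (star h o) (no_relation n).
have Hm2 : in_bTheta m2 := truthful_in_bTheta _ (network_star h o).
have m2_o : upd m2 o (N, set0, set0) = upd m1 h th.
  apply/ffunP => j; rewrite !ffunE !inE.
  case: (eqVneq j h) => [->|jh].
    rewrite (negbTE ho); congr (_, _, _); apply/setP => k.
    by rewrite !inE /star eqxx /= andbF orbF negb_or.
  case: (eqVneq j o) => [->|jo] /=; congr (_, _, _); apply/setP => k;
  by rewrite !inE /star ?(negbTE jh) ?jo ?andbT.
have o_gets_all : g (upd m1 h th) o = 1.
  rewrite -m2_o (DSIC_own_share Hm2 (in_Theta_impartial _ _)).
  have N'_ne0 : [set o] != set0 by apply/set0Pn; exists o; rewrite inE.
  by have := eff (network_star h o) N'_ne0; rewrite big_set1.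
have h_gets_none : g m1 h = 0.
  have th_in_Theta : in_Theta h th := in_Theta_friends _ hV'.
  rewrite -(DSIC_own_share Hm1 th_in_Theta).
  exact: valid_share1_others0 (upd_in_bTheta Hm1 th_in_Theta) ho o_gets_all.
apply/eqP; rewrite eq_le; have /andP[-> _] := range01 Hm0 h.
by rewrite -h_gets_none DSIC_switch_friend_share.
Qed.

End Mechanism.

Theorem theorem4 (R : realType) (n : nat) (wf we : R) :
  (4 <= n)%N -> 0 < wf -> 0 < we ->
  ~ exists g : mechanism R n,
      [/\ mech_range01 g, mech_valid g, DSIC wf we g & efficient g].
Proof.
move=> n_ge4 wf_gt0 _ [g [range01 valid dsic eff]].
have n_gt1 : (1 < n)%N by apply: leq_trans n_ge4.
pose a : 'I_n := Ordinal (ltnW n_gt1); pose b : 'I_n := Ordinal n_gt1.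
have share0 := DSIC_efficient_share_pair0 wf_gt0 dsic range01 valid eff.
have ga := share0 a b erefl; have gb := share0 b a erefl.
have ab_ne0 : [set a; b] != set0 by apply/set0Pn; exists a; rewrite !inE eqxx.
have := eff _ _ _ (network_no_relation n) ab_ne0.
rewrite big_setU1 ?inE //= big_set1 ga setUC gb addr0 => /eqP.
by rewrite eq_sym oner_eq0.
Qed.
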